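(* Let $L\geq1$ be an integer, $P\geq0$, $p_B\in[0,1]$, and $\alpha\sim\mathrm{Binomial}(L,1-p_B)$. For integers $i\geq0$ let $$\bar R(i):=\mathbb{E}\Big[\log\Big(1+\Big|\textstyle\sum_{l=1}^i e^{j\theta_l}\Big|^2P\Big)\Big],$$ where $\theta_1,\theta_2,\ldots$ are i.i.d. $\mathrm{Uniform}(0,2\pi)$ (independent of $\alpha$; the expectation is over the $\theta_l$ only, so $\bar R$ is a deterministic function). Then $$\sup_{r\in\mathbb{R}}r\cdot\mathbb{P}\big(\bar R(\alpha)\geq r\big)=\max_{i\in\{1,\ldots,L\}}\mathbb{P}(\alpha\geq i)\,\bar R(i).$$
   Context: The left-hand side is the outage rate asymptotically (in the frame length) achievable by non-coherent joint transmission with phase diversity over a multi-point intermittent block fading channel with $L$ transmitters, each blocked independently with probability $p_B$. $\log$ is the logarithm in a fixed base. *)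

From Stdlib Require Import Reals Arith.
From Coquelicot Require Import Coquelicot.
Open Scope R_scope.

Definition logb (b x : R) : R := ln x / ln b.

(* Gfun b P i x y = E[ log_b (1 + |z + sum_{l=1}^i e^{j theta_l}|^2 P) ]
   with z = x + j y and theta_1..theta_i i.i.d. Uniform(0, 2 pi);
   the expectation is written as the iterated integral
   (1/(2 pi))^i int_0^{2pi} ... int_0^{2pi} ... d theta_i ... d theta_1. *)
Fixpoint Gfun (b P : R) (i : nat) (x y : R) : R :=
  match i with
  | O => logb b (1 + (x ^ 2 + y ^ 2) * P)
  | S n => / (2 * PI) *
      RInt (fun t => Gfun b P n (x + cos t) (y + sin t)) 0 (2 * PI)
  end.

Definition Rbar_rate (b P : R) (i : nat) : R := Gfun b P i 0 0.

Definition binom_pmf (L : nat) (pB : R) (k : nat) : R :=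
  Binomial.C L k * (1 - pB) ^ k * pB ^ (L - k).

Definition prob_alpha_ge (L : nat) (pB : R) (i : nat) : R :=
  sum_f_R0 (fun k => if Nat.leb i k then binom_pmf L pB k else 0) L.

Definition prob_rate_ge (b P : R) (L : nat) (pB : R) (r : R) : R :=
  sum_f_R0 (fun k => if Rle_dec r (Rbar_rate b P k) then binom_pmf L pB k else 0) L.

Fixpoint max_1_to (f : nat -> R) (n : nat) : R :=
  match n with
  | O => f 1%nat
  | S O => f 1%nat
  | S m => Rmax (max_1_to f m) (f n)
  end.

From Stdlib Require Import Reals Lra Lia Psatz Wf_nat.
From Coquelicot Require Import Coquelicot.
Open Scope R_scope.

(* Write G_n(z) := E[log_b (1 + |z + e^{j theta_1} + ... + e^{j theta_n}|^2 P)], so that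
   Rbar(i) = G_i(0) and G_{n+1} is the mean of G_n over unit circles.  G_0 is subharmonic:
   1 + P |z + e^{it}|^2 = |a + b e^{i(t - phi)}|^2 with a > b >= 0 and a^2 >= 1 + P |z|^2, and
   the circle mean of log |a + b e^{it}|^2 is at least log a^2: by Landen's doubling it is
   2^-m times the mean for (a^(2^m), b^(2^m)), which is at least 2^-m log (a^(2^m) - b^(2^m))^2.
   Averaging preserves pointwise inequalities (and Lipschitz bounds, which give
   integrability), so G_n <= G_{n+1} and Rbar is nondecreasing with Rbar(0) = 0.  Hence
   {k | Rbar(k) >= r} is an up-set {k >= i} for r > 0, and
   r P(Rbar(alpha) >= r) = r P(alpha >= i) <= Rbar(i) P(alpha >= i), with equality at
   r = Rbar(i). *)

Lemma ex_RInt_continuous_everywhere (h : R -> R) (a b : R) :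
  (forall t, continuous h t) -> ex_RInt h a b.
Proof.
  intros h_cont; apply (ex_RInt_continuous (V := R_CompleteNormedModule)).
  intros; apply h_cont.
Qed.

Lemma RInt_comp_plus (h : R -> R) (a b c : R) :
  (forall t, continuous h t) ->
  RInt (fun t => h (t + c)) a b = RInt h (a + c) (b + c).
Proof.
  intros h_cont.
  replace (RInt h (a + c) (b + c)) with (RInt h (1 * a + c) (1 * b + c))
    by now rewrite !Rmult_1_l.
  rewrite <- RInt_comp_lin by now apply ex_RInt_continuous_everywhere.
  apply RInt_ext; intros t _.
  now rewrite (scal_one (V := R_NormedModule)), Rmult_1_l.
Qed.

Section PeriodicIntegrals.

Variables (h : R -> R) (T : R).
Hypothesis h_cont : forall t, continuous h t.
Hypothesis h_periodic : forall t, h (t + T) = h t.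

Let h_int a b : ex_RInt h a b.
Proof. now apply ex_RInt_continuous_everywhere. Qed.

Lemma RInt_periodic_next_period : RInt h T (T + T) = RInt h 0 T.
Proof.
  rewrite <- (Rplus_0_l T) at 1; rewrite <- RInt_comp_plus by exact h_cont.
  apply RInt_ext; intros t _; apply h_periodic.
Qed.

Lemma RInt_periodic_comp_plus (c : R) :
  RInt (fun t => h (t + c)) 0 T = RInt h 0 T.
Proof.
  rewrite RInt_comp_plus, Rplus_0_l by exact h_cont.
  rewrite <- (RInt_Chasles h c 0), <- (RInt_Chasles h 0 T (T + c)) by apply h_int.
  assert (tail : RInt h T (T + c) = RInt h 0 c).
  { replace (RInt h T (T + c)) with (RInt h (0 + T) (c + T))
      by (f_equal; ring).
    rewrite <- RInt_comp_plus by exact h_cont.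
    apply RInt_ext; intros t _; apply h_periodic. }
  rewrite tail, <- (opp_RInt_swap h c 0) by apply h_int.
  change (RInt h c 0 + (RInt h 0 T + - RInt h c 0) = RInt h 0 T); ring.
Qed.

Lemma RInt_periodic_comp_double : RInt (fun t => h (2 * t)) 0 T = RInt h 0 T.
Proof.
  assert (scaled : 2 * RInt (fun t => h (2 * t)) 0 T = RInt h 0 (T + T)).
  { replace (RInt h 0 (T + T)) with (RInt h (2 * 0 + 0) (2 * T + 0))
      by (f_equal; ring).
    rewrite <- RInt_comp_lin by apply h_int.
    change (2 * RInt (fun t => h (2 * t)) 0 T)
      with (scal 2 (RInt (fun t => h (2 * t)) 0 T)).
    rewrite <- RInt_scal.
    - apply RInt_ext; intros t _; now rewrite Rplus_0_r.
    - apply ex_RInt_continuous_everywhere; intro t.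
      apply (continuous_comp (fun t => 2 * t) h); [|apply h_cont].
      apply (ex_derive_continuous (V := R_NormedModule)); auto_derive; auto. }
  rewrite <- (RInt_Chasles h 0 T), RInt_periodic_next_period in scaled by apply h_int.
  change (2 * RInt (fun t => h (2 * t)) 0 T = RInt h 0 T + RInt h 0 T) in scaled; lra.
Qed.

End PeriodicIntegrals.

Definition log_trig (A X Y t : R) : R := ln (A + X * cos t + Y * sin t).

Lemma trig_comb_sq_le (X Y t : R) : (X * cos t + Y * sin t) ^ 2 <= X ^ 2 + Y ^ 2.
Proof.
  pose proof (sin2_cos2 t) as pythagoras; unfold Rsqr in pythagoras.
  pose proof (pow2_ge_0 (X * sin t - Y * cos t)); nra.
Qed.

Lemma trig_comb_pos (A X Y t : R) :
  0 < A -> X ^ 2 + Y ^ 2 < A ^ 2 -> 0 < A + X * cos t + Y * sin t.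
Proof. pose proof (trig_comb_sq_le X Y t); nra. Qed.

Lemma log_trig_continuous (A X Y t : R) :
  0 < A -> X ^ 2 + Y ^ 2 < A ^ 2 -> continuous (log_trig A X Y) t.
Proof.
  intros; apply (ex_derive_continuous (V := R_NormedModule)); unfold log_trig.
  auto_derive; now apply trig_comb_pos.
Qed.

Lemma log_trig_periodic (A X Y t : R) : log_trig A X Y (t + 2 * PI) = log_trig A X Y t.
Proof. unfold log_trig; rewrite cos_plus, sin_plus, cos_2PI, sin_2PI; f_equal; ring. Qed.

(* [(A + X cos t + Y sin t) (A - X cos t - Y sin t)] is again of the form
   [A' + X' cos 2t + Y' sin 2t], and the second factor is the first one at [t + PI]. *)
Lemma RInt_log_trig_landen (A X Y : R) :
  0 < A -> X ^ 2 + Y ^ 2 < A ^ 2 ->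
  RInt (log_trig A X Y) 0 (2 * PI) =
  / 2 * RInt (log_trig (A ^ 2 - (X ^ 2 + Y ^ 2) / 2) (- (X ^ 2 - Y ^ 2) / 2) (- (X * Y)))
          0 (2 * PI).
Proof.
  intros A_pos XY_lt.
  set (A' := A ^ 2 - (X ^ 2 + Y ^ 2) / 2); set (X' := - (X ^ 2 - Y ^ 2) / 2);
    set (Y' := - (X * Y)).
  assert (XY'_lt : X' ^ 2 + Y' ^ 2 < A' ^ 2).
  { replace (X' ^ 2 + Y' ^ 2) with (((X ^ 2 + Y ^ 2) / 2) ^ 2) by (unfold X', Y'; field).
    unfold A'; pose proof (pow2_ge_0 X); pose proof (pow2_ge_0 Y); nra. }
  assert (A'_pos : 0 < A') by (unfold A'; nra).
  assert (cont : forall t, continuous (log_trig A X Y) t)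
    by (intro; now apply log_trig_continuous).
  assert (product : forall t,
    log_trig A X Y t + log_trig A X Y (t + PI) = log_trig A' X' Y' (2 * t)).
  { intro t; unfold log_trig; rewrite neg_cos, neg_sin, <- ln_mult.
    - pose proof (sin2_cos2 t) as pythagoras; unfold Rsqr in pythagoras.
      f_equal; rewrite cos_2a, sin_2a; unfold A', X', Y'.
      replace ((X ^ 2 + Y ^ 2) / 2)
        with ((X ^ 2 + Y ^ 2) / 2 * (sin t * sin t + cos t * cos t))
        by (rewrite pythagoras; ring).
      field.
    - now apply trig_comb_pos.
    - replace (A + X * - cos t + Y * - sin t) with (A + - X * cos t + - Y * sin t) by ring.
      apply trig_comb_pos; [assumption | nra]. }
  rewrite <- (RInt_periodic_comp_double (log_trig A' X' Y') (2 * PI)).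
  2: { intro t; now apply log_trig_continuous. }
  2: { intro t; apply log_trig_periodic. }
  rewrite <- (RInt_ext (fun t => plus (log_trig A X Y t) (log_trig A X Y (t + PI)))
                       (fun t => log_trig A' X' Y' (2 * t)))
    by (intros; apply product).
  rewrite (RInt_plus (V := R_CompleteNormedModule)).
  2: apply ex_RInt_continuous_everywhere, cont.
  2: { apply ex_RInt_continuous_everywhere; intro t.
       apply (continuous_comp (fun t => t + PI)); [|apply cont].
       apply (ex_derive_continuous (V := R_NormedModule)); auto_derive; auto. }
  rewrite RInt_periodic_comp_plus; [|exact cont|intro; apply log_trig_periodic].
  change (RInt (log_trig A X Y) 0 (2 * PI) =
    / 2 * (RInt (log_trig A X Y) 0 (2 * PI) + RInt (log_trig A X Y) 0 (2 * PI))); lra.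
Qed.

Lemma RInt_log_trig_ge_pow2 (m : nat) : forall a b X Y : R,
  0 <= b < a -> X ^ 2 + Y ^ 2 = (2 * a * b) ^ 2 ->
  2 * PI * ln ((a ^ (2 ^ m) - b ^ (2 ^ m)) ^ 2) <=
  2 ^ m * RInt (log_trig (a ^ 2 + b ^ 2) X Y) 0 (2 * PI).
Proof.
  pose proof PI_RGT_0.
  induction m as [|m IH]; intros a b X Y ba XY_eq.
  all: assert (XY_lt : X ^ 2 + Y ^ 2 < (a ^ 2 + b ^ 2) ^ 2)
         by (rewrite XY_eq; pose proof (pow_lt (a ^ 2 - b ^ 2) 2); nra).
  all: assert (A_pos : 0 < a ^ 2 + b ^ 2) by nra.
  - rewrite Rmult_1_l.
    apply Rle_trans with (RInt (fun _ => ln ((a ^ 1 - b ^ 1) ^ 2)) 0 (2 * PI)).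
    { right; rewrite RInt_const, Rminus_0_r; reflexivity. }
    apply RInt_le; [lra | apply ex_RInt_const | |].
    + apply ex_RInt_continuous_everywhere; intro; now apply log_trig_continuous.
    + intros t _; unfold log_trig; apply ln_le; [apply pow_lt; lra|].
      assert (- (2 * a * b) <= X * cos t + Y * sin t).
      { apply Rsqr_neg_pos_le_0; [|nra].
        rewrite !Rsqr_pow2, <- XY_eq; apply trig_comb_sq_le. }
      simpl; nra.
  - rewrite RInt_log_trig_landen by assumption.
    replace ((a ^ 2 + b ^ 2) ^ 2 - (X ^ 2 + Y ^ 2) / 2) with ((a ^ 2) ^ 2 + (b ^ 2) ^ 2)
      by (rewrite XY_eq; field).
    replace (2 ^ S m)%nat with (2 * 2 ^ m)%nat by reflexivity.
    rewrite !pow_mult.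
    apply Rle_trans with (2 ^ m * RInt (log_trig ((a ^ 2) ^ 2 + (b ^ 2) ^ 2)
       (- (X ^ 2 - Y ^ 2) / 2) (- (X * Y))) 0 (2 * PI)).
    + apply IH; [nra|].
      replace ((- (X ^ 2 - Y ^ 2) / 2) ^ 2 + (- (X * Y)) ^ 2)
        with (((X ^ 2 + Y ^ 2) / 2) ^ 2) by field.
      rewrite XY_eq; field.
    + right; simpl; field.
Qed.

Lemma Rle_of_le_plus_geom_half (c d K : R) :
  (forall m : nat, c <= d + K * (/ 2) ^ m) -> c <= d.
Proof.
  intros bound.
  assert (lim : is_lim_seq (fun m => d + K * (/ 2) ^ m) (d + K * 0)).
  { apply is_lim_seq_plus'; [apply is_lim_seq_const|].
    apply (is_lim_seq_scal_l _ K 0), is_lim_seq_geom.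
    rewrite Rabs_pos_eq; lra. }
  rewrite Rmult_0_r, Rplus_0_r in lim.
  exact (is_lim_seq_le _ _ c d bound (is_lim_seq_const c) lim).
Qed.

Lemma ln_sq_pow_sub_ge (a b : R) (N : nat) : 0 <= b < a -> (0 < N)%nat ->
  INR N * ln (a ^ 2) + ln ((1 - b / a) ^ 2) <= ln ((a ^ N - b ^ N) ^ 2).
Proof.
  intros ba N_pos; set (q := b / a).
  assert (q_bounds : 0 <= q < 1).
  { unfold q; split; [apply Rdiv_le_0_compat; lra|].
    apply Rmult_lt_reg_r with a; [lra|]; field_simplify; lra. }
  assert (qN_le : q ^ N <= q).
  { destruct N as [|n]; [lia|]; simpl.
    pose proof (pow_le q n); pose proof (pow_incr q 1 n); rewrite pow1 in *; nra. }
  assert (diff_ge : a ^ N * (1 - q) <= a ^ N - b ^ N).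
  { replace b with (q * a) by (unfold q; field; lra).
    rewrite Rpow_mult_distr; pose proof (pow_lt a N); nra. }
  rewrite <- ln_pow, <- ln_mult by (repeat apply pow_lt; lra).
  apply ln_le; [apply Rmult_lt_0_compat; apply pow_lt; [apply pow_lt|]; lra|].
  rewrite <- pow_mult, Nat.mul_comm, pow_mult, <- Rpow_mult_distr.
  apply pow_incr; split; [|exact diff_ge].
  apply Rmult_le_pos; [apply pow_le|]; lra.
Qed.

(* Jensen's formula for the linear polynomial [a + b e^{it}], as an inequality. *)
Lemma RInt_log_trig_ge (a b X Y : R) :
  0 <= b < a -> X ^ 2 + Y ^ 2 = (2 * a * b) ^ 2 ->
  2 * PI * ln (a ^ 2) <= RInt (log_trig (a ^ 2 + b ^ 2) X Y) 0 (2 * PI).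
Proof.
  intros ba XY_eq; pose proof PI_RGT_0.
  set (K := - (2 * PI * ln ((1 - b / a) ^ 2))).
  apply (Rle_of_le_plus_geom_half _ _ K); intro m.
  pose proof (RInt_log_trig_ge_pow2 m a b X Y ba XY_eq) as bound.
  assert (two_pow_pos : (0 < 2 ^ m)%nat) by (apply Nat.neq_0_lt_0, Nat.pow_nonzero; lia).
  pose proof (ln_sq_pow_sub_ge a b (2 ^ m) ba two_pow_pos) as ln_ge.
  rewrite pow_INR in ln_ge; replace (INR 2) with 2 in ln_ge by (simpl; ring).
  assert (pow_cancel : 2 ^ m * (/ 2) ^ m = 1)
    by (rewrite <- Rpow_mult_distr, Rinv_r, pow1; lra).
  apply Rmult_le_reg_l with (2 ^ m); [apply pow_lt; lra|].
  rewrite Rmult_plus_distr_l.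
  replace (2 ^ m * (K * (/ 2) ^ m)) with (K * (2 ^ m * (/ 2) ^ m)) by ring.
  rewrite pow_cancel; unfold K; nra.
Qed.

(* The integrand is [log_trig (a^2 + b^2) (2 P x) (2 P y)] with [a +- b = sqrt (1 + P (r +- 1)^2)],
   and [1 + P r^2 <= a^2] is Cauchy-Schwarz for the product of these two square roots. *)
Lemma RInt_ln_circle_ge (P x y : R) : 0 <= P ->
  2 * PI * ln (1 + (x ^ 2 + y ^ 2) * P) <=
  RInt (fun t => ln (1 + ((x + cos t) ^ 2 + (y + sin t) ^ 2) * P)) 0 (2 * PI).
Proof.
  intros P_ge0; pose proof PI_RGT_0.
  set (r := sqrt (x ^ 2 + y ^ 2)).
  assert (r_ge0 : 0 <= r) by apply sqrt_pos.
  assert (r_sq : r ^ 2 = x ^ 2 + y ^ 2) by (apply pow2_sqrt; nra).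
  set (s1 := sqrt (1 + P * (r + 1) ^ 2)); set (s2 := sqrt (1 + P * (r - 1) ^ 2)).
  assert (s1_sq : s1 ^ 2 = 1 + P * (r + 1) ^ 2)
    by (apply pow2_sqrt; pose proof (pow2_ge_0 (r + 1)); nra).
  assert (s2_sq : s2 ^ 2 = 1 + P * (r - 1) ^ 2)
    by (apply pow2_sqrt; pose proof (pow2_ge_0 (r - 1)); nra).
  assert (s2_pos : 0 < s2)
    by (apply sqrt_lt_R0; pose proof (pow2_ge_0 (r - 1)); nra).
  assert (s2_le : s2 <= s1) by (apply sqrt_le_1_alt; nra).
  assert (cauchy_schwarz : 1 + P * ((r + 1) * (r - 1)) <= s1 * s2).
  { pose proof (sqrt_cauchy 1 (sqrt P * (r + 1)) 1 (sqrt P * (r - 1))) as cs.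
    assert (sqrtP_sq : sqrt P * sqrt P = P) by now apply sqrt_sqrt.
    unfold Rsqr in cs; unfold s1, s2; set (k := sqrt P) in *.
    replace (1 + P * (r + 1) ^ 2)
      with (1 * 1 + k * (r + 1) * (k * (r + 1))) by (rewrite <- sqrtP_sq; ring).
    replace (1 + P * (r - 1) ^ 2)
      with (1 * 1 + k * (r - 1) * (k * (r - 1))) by (rewrite <- sqrtP_sq; ring).
    replace (1 + P * ((r + 1) * (r - 1)))
      with (1 * 1 + k * (r + 1) * (k * (r - 1))) by (rewrite <- sqrtP_sq; ring).
    exact cs. }
  set (a := (s1 + s2) / 2); set (b := (s1 - s2) / 2).
  apply Rle_trans with (2 * PI * ln (a ^ 2)).
  { apply Rmult_le_compat_l; [lra|].
    apply ln_le; [nra|]; unfold a; nra. }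
  replace (RInt _ 0 (2 * PI))
    with (RInt (log_trig (a ^ 2 + b ^ 2) (2 * P * x) (2 * P * y)) 0 (2 * PI)).
  - apply RInt_log_trig_ge; [unfold a, b; lra|].
    replace (2 * a * b) with ((s1 ^ 2 - s2 ^ 2) / 2) by (unfold a, b; field).
    rewrite s1_sq, s2_sq; nra.
  - apply RInt_ext; intros t _; unfold log_trig; f_equal.
    replace (a ^ 2 + b ^ 2) with ((s1 ^ 2 + s2 ^ 2) / 2) by (unfold a, b; field).
    rewrite s1_sq, s2_sq.
    pose proof (sin2_cos2 t) as pythagoras; unfold Rsqr in pythagoras; nra.
Qed.

Lemma norm_R2 (x y : R) : norm ((x, y) : R * R) = sqrt (x ^ 2 + y ^ 2).
Proof.
  change (sqrt (norm x ^ 2 + norm y ^ 2) = sqrt (x ^ 2 + y ^ 2)).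
  now rewrite !pow2_abs.
Qed.

Lemma sqrt_sum_sq_dist (x y x' y' : R) :
  Rabs (sqrt (x ^ 2 + y ^ 2) - sqrt (x' ^ 2 + y' ^ 2)) <=
  sqrt ((x - x') ^ 2 + (y - y') ^ 2).
Proof. rewrite <- !norm_R2; apply (norm_triangle_inv (x, y) (x', y')). Qed.

Definition lipschitz2 (K : R) (g : R -> R -> R) : Prop :=
  forall x y x' y', Rabs (g x y - g x' y') <= K * sqrt ((x - x') ^ 2 + (y - y') ^ 2).

Definition circle_mean (g : R -> R -> R) (x y : R) : R :=
  / (2 * PI) * RInt (fun t => g (x + cos t) (y + sin t)) 0 (2 * PI).

Section Lipschitz.

Variables (K : R) (g : R -> R -> R).
Hypotheses (K_ge0 : 0 <= K) (g_lip : lipschitz2 K g).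

Lemma lipschitz2_continuous (z : R * R) :
  continuous (fun z : R * R => g (fst z) (snd z)) z.
Proof.
  apply filterlim_locally; intro eps.
  apply (locally_le_locally_norm
           (V := prod_NormedModule R_AbsRing R_NormedModule R_NormedModule)).
  assert (delta_pos : 0 < eps / (K + 1)) by (apply Rdiv_lt_0_compat; [apply cond_pos | lra]).
  exists (mkposreal _ delta_pos); intros [x' y'] near; destruct z as [x y].
  change (norm ((x' - x, y' - y) : R * R) < eps / (K + 1)) in near.
  rewrite norm_R2 in near.
  change (Rabs (g x' y' - g x y) < eps).
  apply Rle_lt_trans with (K * (eps / (K + 1))).
  - apply Rle_trans with (1 := g_lip x' y' x y).
    apply Rmult_le_compat_l; [assumption | lra].
  - apply Rmult_lt_reg_r with (K + 1); [lra|].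
    field_simplify; [|lra].
    pose proof (cond_pos eps); nra.
Qed.

Lemma lipschitz2_continuous_on_circle (x y t : R) :
  continuous (fun t => g (x + cos t) (y + sin t)) t.
Proof.
  apply (continuous_comp_2 (fun t => x + cos t) (fun t => y + sin t) g).
  - apply (continuous_plus (fun _ => x) cos); [apply continuous_const | apply continuous_cos].
  - apply (continuous_plus (fun _ => y) sin); [apply continuous_const | apply continuous_sin].
  - apply lipschitz2_continuous.
Qed.

Lemma lipschitz2_ex_RInt_on_circle (x y : R) :
  ex_RInt (fun t => g (x + cos t) (y + sin t)) 0 (2 * PI).
Proof. apply ex_RInt_continuous_everywhere; intro t; apply lipschitz2_continuous_on_circle. Qed.

Lemma circle_mean_lipschitz2 : lipschitz2 K (circle_mean g).
Proof.
  intros x y x' y'; unfold circle_mean; pose proof PI_RGT_0.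
  rewrite <- Rmult_minus_distr_l, Rabs_mult, Rabs_pos_eq
    by (left; apply Rinv_0_lt_compat; lra).
  apply Rmult_le_reg_l with (2 * PI); [lra|].
  rewrite <- Rmult_assoc, Rinv_r, Rmult_1_l by lra.
  replace (2 * PI * _) with ((2 * PI - 0) * (K * sqrt ((x - x') ^ 2 + (y - y') ^ 2)))
    by ring.
  change (RInt ?f 0 (2 * PI) - RInt ?h 0 (2 * PI))
    with (minus (RInt f 0 (2 * PI)) (RInt h 0 (2 * PI))).
  rewrite <- (RInt_minus (V := R_CompleteNormedModule)) by apply lipschitz2_ex_RInt_on_circle.
  apply abs_RInt_le_const; [lra | |].
  { apply (ex_RInt_minus (V := R_NormedModule)); apply lipschitz2_ex_RInt_on_circle. }
  intros t _; change (minus ?u ?v) with (u - v).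
  replace ((x - x') ^ 2 + (y - y') ^ 2)
    with ((x + cos t - (x' + cos t)) ^ 2 + (y + sin t - (y' + sin t)) ^ 2) by ring.
  apply g_lip.
Qed.

End Lipschitz.

Lemma circle_mean_le (K : R) (g h : R -> R -> R) :
  0 <= K -> lipschitz2 K g -> lipschitz2 K h -> (forall x y, g x y <= h x y) ->
  forall x y, circle_mean g x y <= circle_mean h x y.
Proof.
  intros K_ge0 g_lip h_lip g_le_h x y; unfold circle_mean; pose proof PI_RGT_0.
  apply Rmult_le_compat_l; [left; apply Rinv_0_lt_compat; lra|].
  apply RInt_le; [lra | apply (lipschitz2_ex_RInt_on_circle K) .. |]; try assumption.
  intros t _; apply g_le_h.
Qed.

Lemma ln_1_plus_le (u : R) : 0 <= u -> ln (1 + u) <= u.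
Proof. intros; rewrite <- (ln_exp u) at 2; apply ln_le; [lra | apply exp_ineq1_le]. Qed.

Lemma ln_1_plus_sq_sub_le (P r s : R) :
  0 <= P -> 0 <= s <= r -> ln (1 + P * r ^ 2) - ln (1 + P * s ^ 2) <= 2 * sqrt P * (r - s).
Proof.
  intros P_ge0 sr; set (k := sqrt P); set (d := r - s).
  assert (k_ge0 : 0 <= k) by apply sqrt_pos.
  assert (k_sq : k * k = P) by now apply sqrt_sqrt.
  assert (d_ge0 : 0 <= d) by (unfold d; lra).
  assert (growth : 1 + P * r ^ 2 <= (1 + P * s ^ 2) * (1 + k * d) ^ 2).
  { replace r with (s + d) by (unfold d; ring); rewrite <- k_sq.
    assert (0 <= k * s) by nra.
    assert (0 <= k * d * (1 + (k * s) ^ 2 - k * s)) by (apply Rmult_le_pos; nra).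
    nra. }
  assert (ln (1 + P * r ^ 2) <= ln (1 + P * s ^ 2) + 2 * ln (1 + k * d)).
  { replace (2 * ln (1 + k * d)) with (ln ((1 + k * d) ^ 2))
      by (rewrite ln_pow by nra; simpl; ring).
    rewrite <- ln_mult by nra; apply ln_le; nra. }
  pose proof (ln_1_plus_le (k * d)); nra.
Qed.

Lemma ln_1_plus_norm_sq_lipschitz2 (P : R) :
  0 <= P -> lipschitz2 (2 * sqrt P) (fun x y => ln (1 + (x ^ 2 + y ^ 2) * P)).
Proof.
  intros P_ge0 x y x' y'.
  apply Rle_trans with (2 * sqrt P * Rabs (sqrt (x ^ 2 + y ^ 2) - sqrt (x' ^ 2 + y' ^ 2))).
  2: { apply Rmult_le_compat_l; [pose proof (sqrt_pos P); lra | apply sqrt_sum_sq_dist]. }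
  set (r := sqrt (x ^ 2 + y ^ 2)); set (s := sqrt (x' ^ 2 + y' ^ 2)).
  rewrite <- (pow2_sqrt (x ^ 2 + y ^ 2)), <- (pow2_sqrt (x' ^ 2 + y' ^ 2)) by nra.
  fold r s.
  assert (0 <= r) by apply sqrt_pos; assert (0 <= s) by apply sqrt_pos.
  rewrite (Rmult_comm (r ^ 2)), (Rmult_comm (s ^ 2)).
  destruct (Rle_or_lt s r) as [sr | rs].
  - pose proof (ln_1_plus_sq_sub_le P r s P_ge0 (conj (sqrt_pos _) sr)).
    assert (ln (1 + P * s ^ 2) <= ln (1 + P * r ^ 2)).
    { apply ln_le; [nra|]; apply Rplus_le_compat_l, Rmult_le_compat_l, pow_incr; lra. }
    rewrite !Rabs_pos_eq by lra; lra.
  - pose proof (ln_1_plus_sq_sub_le P s r P_ge0 (conj (sqrt_pos _) (Rlt_le _ _ rs))).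
    assert (ln (1 + P * r ^ 2) <= ln (1 + P * s ^ 2)).
    { apply ln_le; [nra|]; apply Rplus_le_compat_l, Rmult_le_compat_l, pow_incr; lra. }
    rewrite (Rabs_minus_sym r), (Rabs_minus_sym (ln _)), !Rabs_pos_eq by lra; lra.
Qed.

Section Rate.

Variables (b P : R).
Hypotheses (b_gt1 : 1 < b) (P_ge0 : 0 <= P).

Let ln_b_pos : 0 < ln b.
Proof. rewrite <- ln_1; apply ln_increasing; lra. Qed.

Let K := 2 * sqrt P / ln b.

Let K_ge0 : 0 <= K.
Proof. apply Rdiv_le_0_compat; [pose proof (sqrt_pos P); lra | assumption]. Qed.

Lemma Gfun_lipschitz2 (n : nat) : lipschitz2 K (Gfun b P n).
Proof.
  induction n as [|n IH].
  - intros x y x' y'; cbn [Gfun]; unfold logb, K, Rdiv.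
    assert (0 < / ln b) by now apply Rinv_0_lt_compat.
    rewrite <- Rmult_minus_distr_r, Rabs_mult, (Rabs_pos_eq (/ ln b)) by lra.
    apply Rle_trans with (2 * sqrt P * sqrt ((x - x') ^ 2 + (y - y') ^ 2) * / ln b);
      [apply Rmult_le_compat_r; [lra|] | right; ring].
    now apply ln_1_plus_norm_sq_lipschitz2.
  - exact (circle_mean_lipschitz2 K (Gfun b P n) K_ge0 IH).
Qed.

Lemma Gfun_0_le_circle_mean (x y : R) : Gfun b P 0 x y <= circle_mean (Gfun b P 0) x y.
Proof.
  pose proof PI_RGT_0.
  assert (ln_cont : forall t, continuous (fun t =>
            ln (1 + ((x + cos t) ^ 2 + (y + sin t) ^ 2) * P)) t).
  { intro t; apply (lipschitz2_continuous_on_circle (2 * sqrt P)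
                     (fun x y => ln (1 + (x ^ 2 + y ^ 2) * P))).
    - pose proof (sqrt_pos P); lra.
    - now apply ln_1_plus_norm_sq_lipschitz2. }
  unfold circle_mean; cbn [Gfun]; unfold logb, Rdiv.
  rewrite (RInt_ext _ (fun t => scal (/ ln b) (ln (1 + ((x + cos t) ^ 2 + (y + sin t) ^ 2) * P))))
    by (intros; apply Rmult_comm).
  rewrite (RInt_scal (V := R_CompleteNormedModule)) by now apply ex_RInt_continuous_everywhere.
  change (scal (/ ln b) ?u) with (/ ln b * u).
  apply Rmult_le_reg_l with (2 * PI * ln b); [nra|].
  field_simplify; try lra.
  pose proof (RInt_ln_circle_ge P x y P_ge0); nra.
Qed.

Lemma Gfun_le_succ (n : nat) : forall x y, Gfun b P n x y <= Gfun b P (S n) x y.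
Proof.
  induction n as [|n IH].
  - exact Gfun_0_le_circle_mean.
  - exact (circle_mean_le K _ _ K_ge0 (Gfun_lipschitz2 n) (Gfun_lipschitz2 (S n)) IH).
Qed.

Lemma Rbar_rate_growing : Un_growing (Rbar_rate b P).
Proof. intro n; apply Gfun_le_succ. Qed.

End Rate.

Lemma Rbar_rate_0 (b P : R) : Rbar_rate b P 0 = 0.
Proof.
  unfold Rbar_rate, Gfun, logb.
  replace (1 + (0 ^ 2 + 0 ^ 2) * P) with 1 by ring.
  now rewrite ln_1, Rdiv_0_l.
Qed.

Lemma max_1_to_ge (f : nat -> R) (n i : nat) : (1 <= i <= n)%nat -> f i <= max_1_to f n.
Proof.
  induction n as [|[|n] IH]; intros i_range; [lia | replace i with 1%nat by lia; simpl; lra |].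
  change (max_1_to f (S (S n))) with (Rmax (max_1_to f (S n)) (f (S (S n)))).
  destruct (Nat.eq_dec i (S (S n))) as [->|i_ne]; [apply Rmax_r|].
  apply Rle_trans with (max_1_to f (S n)); [apply IH; lia | apply Rmax_l].
Qed.

Lemma max_1_to_le (f : nat -> R) (n : nat) (u : R) :
  (1 <= n)%nat -> (forall i, (1 <= i <= n)%nat -> f i <= u) -> max_1_to f n <= u.
Proof.
  induction n as [|[|n] IH]; intros n_pos f_le; [lia | apply f_le; lia |].
  apply Rmax_lub; [apply IH; [lia | intros; apply f_le; lia] | apply f_le; lia].
Qed.

Definition tail_mass (w : nat -> R) (L i : nat) : R :=
  sum_f_R0 (fun k => if Nat.leb i k then w k else 0) L.

Definition level_mass (f w : nat -> R) (L : nat) (r : R) : R :=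
  sum_f_R0 (fun k => if Rle_dec r (f k) then w k else 0) L.

Section LevelSets.

Variables (f w : nat -> R) (L : nat).
Hypotheses (f_growing : Un_growing f) (f_0 : f 0%nat = 0) (w_ge0 : forall k, 0 <= w k).

Lemma tail_mass_ge0 (i : nat) : 0 <= tail_mass w L i.
Proof. apply cond_pos_sum; intro k; destruct (Nat.leb i k); [apply w_ge0 | lra]. Qed.

Lemma level_mass_ge0 (r : R) : 0 <= level_mass f w L r.
Proof. apply cond_pos_sum; intro k; destruct (Rle_dec r (f k)); [apply w_ge0 | lra]. Qed.

Lemma tail_mass_le_level_mass (i : nat) : tail_mass w L i <= level_mass f w L (f i).
Proof.
  apply sum_Rle; intros k _.
  destruct (Nat.leb i k) eqn:ik, (Rle_dec (f i) (f k)) as [|not_le]; try lra.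
  - exfalso; apply not_le, Rge_le, growing_prop; [assumption | now apply Nat.leb_le].
  - apply w_ge0.
Qed.

(* The least [i] with [r <= f i] or [L < i]: then [r <= f k] iff [i <= k] for [k <= L]. *)
Lemma level_mass_eq_tail_mass (r : R) : 0 < r ->
  exists i, (1 <= i)%nat /\ ((i <= L)%nat -> r <= f i) /\
            level_mass f w L r = tail_mass w L i.
Proof.
  intros r_pos.
  destruct (dec_inh_nat_subset_has_unique_least_element (fun k => r <= f k \/ (L < k)%nat))
    as [i [[reach least] _]].
  { intro k; destruct (Rle_dec r (f k)), (Nat.lt_ge_cases L k); tauto. }
  { exists (S L); right; lia. }
  exists i; split; [|split].
  - destruct i; [destruct reach; [lra | lia] | lia].
  - intros i_le; destruct reach; [assumption | lia].
  - apply sum_eq; intros k k_le.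
    destruct (Nat.leb i k) eqn:ik, (Rle_dec r (f k)) as [r_le | not_le]; try reflexivity.
    + exfalso; apply not_le; apply Nat.leb_le in ik.
      destruct reach as [reach | ?]; [|lia].
      apply Rle_trans with (1 := reach), Rge_le, growing_prop; assumption.
    + apply Nat.leb_gt in ik; specialize (least k (or_introl r_le)); lia.
Qed.

Lemma tail_mass_beyond (i : nat) : (L < i)%nat -> tail_mass w L i = 0.
Proof.
  intros Li; transitivity (sum_f_R0 (fun _ => 0) L); [|rewrite sum_cte; ring].
  apply sum_eq; intros k k_le.
  destruct (Nat.leb i k) eqn:ik; [apply Nat.leb_le in ik; lia | reflexivity].
Qed.

Lemma is_lub_level_mass : (1 <= L)%nat ->
  is_lub (fun v => exists r, v = r * level_mass f w L r)
         (max_1_to (fun i => tail_mass w L i * f i) L).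
Proof.
  intros L_pos.
  assert (f_ge0 : forall i, 0 <= f i)
    by (intro i; rewrite <- f_0; apply Rge_le, growing_prop; [assumption | lia]).
  set (F := fun i => tail_mass w L i * f i).
  assert (max_ge0 : 0 <= max_1_to F L).
  { apply Rle_trans with (F 1%nat); [|apply (max_1_to_ge F); lia].
    apply Rmult_le_pos; [apply tail_mass_ge0 | apply f_ge0]. }
  split.
  - intros v [r ->].
    destruct (Rle_or_lt r 0) as [r_le0 | r_pos].
    { pose proof (level_mass_ge0 r); nra. }
    destruct (level_mass_eq_tail_mass r r_pos) as [i [i_pos [r_le ->]]].
    destruct (Nat.le_gt_cases i L) as [i_le | Li].
    + apply Rle_trans with (F i); [|now apply (max_1_to_ge F)].
      unfold F; rewrite Rmult_comm; apply Rmult_le_compat_l; [apply tail_mass_ge0 | auto].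
    + now rewrite tail_mass_beyond, Rmult_0_r.
  - intros u u_ub; apply max_1_to_le; [assumption|]; intros i _.
    apply Rle_trans with (f i * level_mass f w L (f i)); [|apply u_ub; eauto].
    unfold F; rewrite Rmult_comm.
    apply Rmult_le_compat_l; [apply f_ge0 | apply tail_mass_le_level_mass].
Qed.

End LevelSets.

Lemma binom_pmf_ge0 (L : nat) (pB : R) (k : nat) : 0 <= pB <= 1 -> 0 <= binom_pmf L pB k.
Proof.
  intros pB_range; unfold binom_pmf, Binomial.C.
  apply Rmult_le_pos; [apply Rmult_le_pos|]; [|apply pow_le; lra ..].
  apply Rdiv_le_0_compat; [apply pos_INR | apply Rmult_lt_0_compat; apply INR_fact_lt_0].
Qed.

Theorem proposition6 (b : R) (L : nat) (P pB : R) :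
  1 < b -> (1 <= L)%nat -> 0 <= P -> 0 <= pB <= 1 ->
  is_lub (fun v => exists r : R, v = r * prob_rate_ge b P L pB r)
         (max_1_to (fun i => prob_alpha_ge L pB i * Rbar_rate b P i) L).
Proof.
  intros b_gt1 L_pos P_ge0 pB_range.
  apply (is_lub_level_mass (Rbar_rate b P) (binom_pmf L pB) L).
  - now apply Rbar_rate_growing.
  - apply Rbar_rate_0.
  - intro k; now apply binom_pmf_ge0.
  - exact L_pos.
Qed.
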